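(* Let $c\geq 1$ be an integer. For all integers $n\geq 1$, $$\bar a_c(n)\equiv\begin{cases}2 \pmod 4 & \text{if } n=k^2 \text{ for some } k\in\mathbb{Z},\\ 2(c+1)\pmod 4 & \text{if } n=2k^2 \text{ for some } k\in\mathbb{Z},\\ 0\pmod 4 & \text{otherwise.}\end{cases}$$
   Context: For an integer $k\geq 1$ let $f_k:=\prod_{n\geq 1}(1-q^{kn})$. For an integer $c\geq1$, the generalized overcubic partition function $\bar a_c(n)$ is defined by the generating function $\sum_{n\geq 0}\bar a_c(n)q^n=\dfrac{f_4^{c-1}}{f_1^2f_2^{2c-3}}$. *)

(* Formal power series over int, represented by coefficient
   functions nat -> int. *)
From mathcomp Require Import all_boot all_order all_algebra.
Set Implicit Arguments. Unset Strict Implicit. Unset Printing Implicit Defensive.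
Import Order.TTheory GRing.Theory Num.Theory.
Local Open Scope ring_scope.

Definition series := nat -> int.

Definition smul (a b : series) : series :=
  fun n => \sum_(i < n.+1) a i * b (n - i)%N.

Definition sone : series := fun n => (n == 0%N)%:R.
Definition smon (d : nat) : series := fun n => (n == d)%:R.
Definition ssub (a b : series) : series := fun n => a n - b n.

Definition spow (a : series) (k : nat) : series := iter k (smul a) sone.

(* Inverse of a series with constant term 1: 1/a = sum_j (1 - a)^j; since
   (1 - a) has zero constant term, the coefficient of q^n only involves j <= n. *)
Definition sinv (a : series) : series :=
  fun n => \sum_(j < n.+1) spow (ssub sone a) j n.

Definition szpow (a : series) (e : int) : series :=
  match e with
  | Posz k => spow a k
  | Negz k => spow (sinv a) k.+1
  end.

(* f_k = prod_{m >= 1} (1 - q^{k m}); for k >= 1 the coefficient of q^n only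
   depends on the factors with m <= n. *)
Definition f (k : nat) : series :=
  fun n => (\big[smul/sone]_(1 <= m < n.+1) ssub sone (smon (k * m))) n.

(* generalized overcubic partitions:
   sum abar_c(n) q^n = f_4^{c-1} / (f_1^2 f_2^{2c-3}) = f_4^{c-1} f_1^{-2} f_2^{3-2c} *)
Definition abar (c : nat) : series :=
  smul (spow (f 4) (c - 1)) (smul (szpow (f 1) (-2)) (szpow (f 2) (3 - 2 * (c : int)))).

(* Power series are handled through their truncations: polynomials over Z/4
   compared coefficientwise up to a degree N.  Modulo 4,
   (1 - x) / (1 + x) = 1 + 2 (x + x^2 + ...), so
   f_k = (-q^k; q^k)_oo * (1 + 2 sum_{m, r >= 1} q^(k m r)); the terms with m <> r
   cancel in pairs, leaving f_k = (-q^k; q^k)_oo * (1 + 2 T_k) with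
   T_k = sum_{j >= 1} q^(k j^2).  Since f_2k = f_k * (-q^k; q^k)_oo, this gives
   f_k^2 = f_2k * (1 + 2 T_k).  Clearing the denominator f_1^2 f_2^(2c-2) of
   abar_c and using (1 + 2 T)^2 = 1 yields
   abar_c = (1 + 2 T_1) (1 + 2 T_2)^(c-1) = 1 + 2 T_1 + 2 (c - 1) T_2  (mod 4),
   and no n >= 1 is both a square and twice a square. *)

From mathcomp Require Import all_boot all_order all_algebra.
From mathcomp Require Import zify ring.
Import Order.TTheory GRing.Theory Num.Theory.
Local Open Scope ring_scope.

Set Implicit Arguments.
Unset Strict Implicit.
Unset Printing Implicit Defensive.

Section Truncation.

Context {R : comNzRingType}.
Implicit Types (N : nat) (p q u : {poly R}) (a b : series).

Definition eq_upto N p q := [forall i : 'I_N.+1, p`_i == q`_i].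

Lemma eq_uptoP N p q :
  reflect (forall i, (i <= N)%N -> p`_i = q`_i) (eq_upto N p q).
Proof.
apply: (iffP forallP) => [h i hi | h i]; last by apply/eqP/h; rewrite -ltnS.
by have /eqP := h (Ordinal (hi : (i < N.+1)%N)).
Qed.

Lemma eq_upto_refl N p : eq_upto N p p.
Proof. exact/eq_uptoP. Qed.

Lemma eq_upto_sym N p q : eq_upto N p q -> eq_upto N q p.
Proof. by move/eq_uptoP=> hpq; apply/eq_uptoP => i hi; rewrite hpq. Qed.

Lemma eq_upto_trans N p q r : eq_upto N p q -> eq_upto N q r -> eq_upto N p r.
Proof.
by move=> /eq_uptoP hpq /eq_uptoP hqr; apply/eq_uptoP => i hi; rewrite hpq ?hqr.
Qed.

Lemma eq_uptoB N p p' q q' :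
  eq_upto N p p' -> eq_upto N q q' -> eq_upto N (p - q) (p' - q').
Proof.
move=> /eq_uptoP hp /eq_uptoP hq; apply/eq_uptoP => i hi.
by rewrite !coefB hp ?hq.
Qed.

Lemma eq_uptoM N p p' q q' :
  eq_upto N p p' -> eq_upto N q q' -> eq_upto N (p * q) (p' * q').
Proof.
move=> /eq_uptoP hp /eq_uptoP hq; apply/eq_uptoP => i hi.
rewrite !coefM; apply: eq_bigr => -[j /= hj] _.
by rewrite hp ?hq //; lia.
Qed.

Lemma eq_uptoX N p p' m : eq_upto N p p' -> eq_upto N (p ^+ m) (p' ^+ m).
Proof.
move=> hp; elim: m => [|m IHm]; first exact: eq_upto_refl.
by rewrite !exprS; apply: eq_uptoM.
Qed.

Lemma eq_upto_prod N (I : Type) (r : seq I) (P : pred I) (F G : I -> {poly R}) :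
  (forall i, P i -> eq_upto N (F i) (G i)) ->
  eq_upto N (\prod_(i <- r | P i) F i) (\prod_(i <- r | P i) G i).
Proof.
move=> hFG; apply: (big_ind2 (eq_upto N)) => //; first exact: eq_upto_refl.
exact: eq_uptoM.
Qed.

Lemma eq_upto_addXn N p q d : (N < d)%N -> eq_upto N p (p + q * 'X^d).
Proof.
move=> ltNd; apply/eq_uptoP => i hi; rewrite coefD coefMXn.
have -> : (i < d)%N by lia.
by rewrite addr0.
Qed.

Lemma coef0X p m : (p ^+ m)`_0 = p`_0 ^+ m.
Proof. exact: (rmorphXn (coefp 0)). Qed.

Lemma coef_expr_eq0 p j i : p`_0 = 0 -> (i < j)%N -> (p ^+ j)`_i = 0.
Proof.
move=> p0; elim: j i => [|j IHj] i // lt_ij; rewrite exprS coefM.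
apply: big1 => -[[|l] hl] _ /=; first by rewrite p0 mul0r.
by rewrite IHj ?mulr0 //; lia.
Qed.

Lemma eq_upto_mul_geom N p :
  p`_0 = 1 -> eq_upto N (p * \sum_(j < N.+1) (1 - p) ^+ j) 1.
Proof.
move=> p0; apply/eq_uptoP => i hi; set v := 1 - p.
have v0 : v`_0 = 0 by rewrite coefB coef1 p0 subrr.
have -> : p * \sum_(j < N.+1) v ^+ j = 1 - v ^+ N.+1.
  by rewrite -[p](subKr 1) -/v -opprB mulNr -subrX1 opprB.
by rewrite coefB coef_expr_eq0 ?subr0.
Qed.

Lemma eq_upto_mulIr N u p q :
  u`_0 = 1 -> eq_upto N (p * u) (q * u) -> eq_upto N p q.
Proof.
move=> u0 hpq; have hu := eq_upto_mul_geom N u0.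
set v := \sum_(j < _) _ in hu.
have hp : eq_upto N p (p * u * v).
  rewrite -mulrA -[X in eq_upto _ X _]mulr1.
  exact: eq_uptoM (eq_upto_refl _ _) (eq_upto_sym hu).
have hq : eq_upto N (q * u * v) q.
  by rewrite -mulrA -[X in eq_upto _ _ X]mulr1; apply: eq_uptoM (eq_upto_refl _ _) hu.
by apply: eq_upto_trans hp (eq_upto_trans (eq_uptoM hpq (eq_upto_refl _ _)) hq).
Qed.

Definition poly_of_series N a : {poly R} := \poly_(i < N.+1) (a i)%:~R.

Lemma coef_poly_of_series N a i :
  (i <= N)%N -> (poly_of_series N a)`_i = (a i)%:~R.
Proof. by move=> hi; rewrite coef_poly ltnS hi. Qed.

Lemma poly_of_seriesM N a b :
  eq_upto N (poly_of_series N (smul a b)) (poly_of_series N a * poly_of_series N b).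
Proof.
apply/eq_uptoP => i hi; rewrite coefM coef_poly_of_series // rmorph_sum.
apply: eq_bigr => -[j /= hj] _; rewrite intrM !coef_poly_of_series //; lia.
Qed.

Lemma poly_of_series1 N : eq_upto N (poly_of_series N sone) 1.
Proof. by apply/eq_uptoP => i hi; rewrite coef_poly_of_series // coef1 rmorph_nat. Qed.

Lemma poly_of_series_mon N d : eq_upto N (poly_of_series N (smon d)) 'X^d.
Proof. by apply/eq_uptoP => i hi; rewrite coef_poly_of_series // coefXn rmorph_nat. Qed.

Lemma poly_of_seriesB N a b :
  eq_upto N (poly_of_series N (ssub a b)) (poly_of_series N a - poly_of_series N b).
Proof. by apply/eq_uptoP => i hi; rewrite coefB !coef_poly_of_series // intrB. Qed.

Lemma poly_of_series_prod N (I : Type) (r : seq I) (F : I -> series) :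
  eq_upto N (poly_of_series N (\big[smul/sone]_(i <- r) F i))
            (\prod_(i <- r) poly_of_series N (F i)).
Proof.
apply: (big_ind2 (fun a p => eq_upto N (poly_of_series N a) p)) => //.
- exact: poly_of_series1.
- by move=> a p b q hp hq; apply/(eq_upto_trans (poly_of_seriesM _ _ _))/eq_uptoM.
- by move=> i _; apply: eq_upto_refl.
Qed.

Lemma poly_of_seriesX N a m :
  eq_upto N (poly_of_series N (spow a m)) (poly_of_series N a ^+ m).
Proof.
elim: m => [|m IHm]; first exact: poly_of_series1.
rewrite exprS /spow iterS; apply: eq_upto_trans (poly_of_seriesM _ _ _) _.
exact/eq_uptoM/IHm/eq_upto_refl.
Qed.

Lemma poly_of_series_inv N a :
  a 0%N = 1 -> eq_upto N (poly_of_series N a * poly_of_series N (sinv a)) 1.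
Proof.
move=> a0; set p := poly_of_series N a.
have p0 : p`_0 = 1 by rewrite coef_poly_of_series // a0.
apply: eq_upto_trans (eq_upto_mul_geom N p0); apply/eq_uptoM/eq_uptoP => [|i hi].
  exact: eq_upto_refl.
have v0 : (1 - p)`_0 = 0 by rewrite coefB coef1 p0 subrr.
have /eq_uptoX/eq_uptoP hv : eq_upto N (poly_of_series N (ssub sone a)) (1 - p).
  exact/(eq_upto_trans (poly_of_seriesB _ _ _))/eq_uptoB/eq_upto_refl/poly_of_series1.
rewrite coef_poly_of_series // rmorph_sum coef_sum /=.
rewrite (big_ord_widen N.+1 (fun j => (spow (ssub sone a) j i)%:~R)) ?ltnS //.
rewrite [RHS](bigID (fun j : 'I_N.+1 => (j < i.+1)%N)) /= [X in _ = _ + X]big1 ?addr0.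
  apply: eq_bigr => j _; rewrite -hv // -(coef_poly_of_series (N := N)) //.
  by move/eq_uptoP: (poly_of_seriesX N (ssub sone a) j) => ->.
by move=> j; rewrite -leqNgt => lt_ij; rewrite coef_expr_eq0.
Qed.

End Truncation.

Section ModFour.

Variable S : comNzRingType.
Hypothesis four0 : 4%:R = 0 :> S.
Implicit Types x y z : S.

Lemma sqr_1add2 x : (1 + 2 * x) ^+ 2 = 1.
Proof. by ring: four0. Qed.

Lemma expr_1add2 x m : (1 + 2 * x) ^+ m = 1 + 2 * (x *+ m).
Proof.
elim: m => [|m IHm]; first by rewrite mulr0n mulr0 addr0.
by rewrite exprS IHm mulrS; ring: four0.
Qed.

Lemma prod_1add2 (I : Type) (r : seq I) (w : I -> S) :
  \prod_(i <- r) (1 + 2 * w i) = 1 + 2 * \sum_(i <- r) w i.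
Proof.
elim: r => [|i r IHr]; first by rewrite !big_nil mulr0 addr0.
by rewrite !big_cons IHr; ring: four0.
Qed.

Lemma mul2_sum_sym (I : Type) (r : seq I) (G : I -> I -> S) :
  (forall i j, G i j = G j i) ->
  2 * \sum_(i <- r) \sum_(j <- r) G i j = 2 * \sum_(i <- r) G i i.
Proof.
move=> symG; elim: r => [|i r IHr]; first by rewrite !big_nil.
rewrite !big_cons.
have -> : \sum_(k <- r) \sum_(j <- i :: r) G k j =
          \sum_(k <- r) G i k + \sum_(k <- r) \sum_(j <- r) G k j.
  by rewrite -big_split; apply: eq_bigr => k _; rewrite big_cons symG.
by ring: four0 IHr.
Qed.

Lemma eq_add4r x y z : x = y + 4%:R * z -> x = y.
Proof. by rewrite four0 mul0r addr0. Qed.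

Lemma factor_1sub y N :
  (1 + y) * (1 + 2 * \sum_(1 <= r < N.+1) y ^+ r) = 1 - y + 2 * y ^+ N.+1.
Proof.
elim: N => [|N IHN]; first by rewrite big_geq //; ring.
apply: (eq_add4r (z := y ^+ N.+1)); rewrite big_nat_recr //=.
rewrite [LHS](_ : _ = (1 + y) * (1 + 2 * \sum_(1 <= r < N.+1) y ^+ r)
                      + 2 * (1 + y) * y ^+ N.+1); last by ring.
by rewrite IHN [y ^+ N.+2]exprS; ring.
Qed.

End ModFour.

Section EtaProducts.

Context {R : comNzRingType}.
Implicit Types k N : nat.

Definition fpoly k N : {poly R} := \prod_(1 <= m < N.+1) (1 - 'X^(k * m)).
Definition apoly k N : {poly R} := \prod_(1 <= m < N.+1) (1 + 'X^(k * m)).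
Definition tpoly k N : {poly R} := \sum_(1 <= j < N.+1) 'X^(k * j ^ 2).

Definition scaled_squares k N := [seq (k * j ^ 2)%N | j <- iota 1 N].

Lemma coef0_fpoly k N : (0 < k)%N -> (fpoly k N)`_0 = 1.
Proof.
move=> k_gt0; rewrite coef0_prod big_seq big1 // => m.
rewrite mem_index_iota => /andP[m_gt0 _].
rewrite coefB coef1 coefXn; have /negbTE-> : (0 != k * m)%N by lia.
by rewrite subr0.
Qed.

Lemma fpoly_eq_upto k N M :
  (0 < k)%N -> (N <= M)%N -> eq_upto N (fpoly k M) (fpoly k N).
Proof.
move=> k_gt0 le_NM; rewrite /fpoly (big_cat_nat _ (n := N.+1)) //=.
rewrite -[X in eq_upto _ _ X]mulr1; apply: eq_uptoM (eq_upto_refl _ _) _.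
rewrite [X in eq_upto _ _ X](_ : 1 = \prod_(N.+1 <= m < M.+1) 1); last by rewrite big1_eq.
rewrite big_nat_cond [X in eq_upto _ _ X]big_nat_cond.
apply: eq_upto_prod => m /andP[/andP[lt_Nm _] _].
by rewrite -mulN1r; apply/eq_upto_sym/eq_upto_addXn; nia.
Qed.

Lemma poly_of_series_f k N : (0 < k)%N -> eq_upto N (poly_of_series N (f k)) (fpoly k N).
Proof.
move=> k_gt0; apply/eq_uptoP => i le_iN.
have /eq_uptoP fki : eq_upto i (poly_of_series i
    (\big[smul/sone]_(1 <= m < i.+1) ssub sone (smon (k * m)))) (fpoly k i).
  apply: eq_upto_trans (poly_of_series_prod _ _ _) _; apply: eq_upto_prod => m _.
  apply: eq_upto_trans (poly_of_seriesB _ _ _) _.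
  exact: eq_uptoB (poly_of_series1 _) (poly_of_series_mon _ _).
rewrite coef_poly_of_series // /f -(coef_poly_of_series (N := i)) // fki //.
by move/eq_uptoP: (fpoly_eq_upto k_gt0 le_iN) => ->.
Qed.

Lemma fpoly_mul_inv k N :
  (0 < k)%N -> eq_upto N (fpoly k N * poly_of_series N (sinv (f k))) 1.
Proof.
move=> k_gt0; have f0 : f k 0%N = 1 by rewrite /f big_geq.
apply: eq_upto_trans (poly_of_series_inv N f0).
exact: eq_uptoM (eq_upto_sym (poly_of_series_f _ k_gt0)) (eq_upto_refl _ _).
Qed.

Lemma poly_of_series_szpow_f k N (e : int) m p : (0 < k)%N -> e + m%:Z = p%:Z ->
  eq_upto N (poly_of_series N (szpow (f k) e) * fpoly k N ^+ m) (fpoly k N ^+ p).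
Proof.
move=> k_gt0; case: e => e emp.
  have -> : p = (e + m)%N by lia.
  rewrite exprD; apply: eq_uptoM (eq_upto_refl _ _).
  exact: eq_upto_trans (poly_of_seriesX _ _ _) (eq_uptoX _ (poly_of_series_f _ k_gt0)).
have -> : m = (e.+1 + p)%N by move: emp; rewrite NegzE; lia.
apply: eq_upto_trans (eq_uptoM (poly_of_seriesX _ _ _) (eq_upto_refl _ _)) _.
set F := fpoly k N; set G := poly_of_series N (sinv (f k)).
rewrite (_ : G ^+ e.+1 * F ^+ (e.+1 + p) = (F * G) ^+ e.+1 * F ^+ p); last first.
  by rewrite exprD exprMn; ring.
rewrite -[X in eq_upto _ _ X]mul1r; apply: eq_uptoM (eq_upto_refl _ _).
by rewrite -(expr1n _ e.+1); apply/eq_uptoX/fpoly_mul_inv.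
Qed.

Lemma fpoly_double k N : fpoly (2 * k) N = fpoly k N * apoly k N.
Proof.
rewrite /fpoly /apoly -big_split; apply: eq_bigr => m _ /=.
by rewrite (_ : 2 * k * m = k * m * 2)%N ?exprM; [ring | lia].
Qed.

Lemma coef_sum_Xn (s : seq nat) n : (\sum_(d <- s) 'X^d)`_n = (count_mem n s)%:R :> R.
Proof.
rewrite coef_sum; elim: s => [|d s IHs]; first by rewrite big_nil.
by rewrite big_cons /= coefXn IHs natrD eq_sym.
Qed.

Lemma coef_tpoly k N n : (0 < k)%N ->
  (tpoly k N)`_n = (n \in scaled_squares k N)%:R.
Proof.
move=> k_gt0; rewrite /tpoly /scaled_squares -(big_map (fun j => k * j ^ 2)%N xpredT).
rewrite coef_sum_Xn count_uniq_mem; first by rewrite /index_iota subn1.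
rewrite map_inj_in_uniq ?iota_uniq // => i j _ _ /eqP.
by rewrite eqn_mul2l eqn_exp2r // gtn_eqF //= => /eqP.
Qed.

Lemma poly_of_series_abar_mul c N :
  eq_upto N (poly_of_series N (abar c.+1) * (fpoly 1 N ^+ 2 * fpoly 2 N ^+ (2 * c)))
            (fpoly 4 N ^+ c * fpoly 2 N).
Proof.
rewrite /abar subSS subn0.
set A := spow (f 4) c; set B := szpow (f 1) (-2); set C := szpow (f 2) _.
have hABC : @eq_upto R N (poly_of_series N (smul A (smul B C)))
    (poly_of_series N A * (poly_of_series N B * poly_of_series N C)).
  apply: eq_upto_trans (poly_of_seriesM _ _ _) _.
  exact: eq_uptoM (eq_upto_refl _ _) (poly_of_seriesM _ _ _).
apply: eq_upto_trans (eq_uptoM hABC (eq_upto_refl _ _)) _.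
rewrite (_ : _ * _ = poly_of_series N A * (poly_of_series N B * fpoly 1 N ^+ 2
                     * (poly_of_series N C * fpoly 2 N ^+ (2 * c)))); last by ring.
rewrite (_ : fpoly 4 N ^+ c * _ = fpoly 4 N ^+ c * (fpoly 1 N ^+ 0 * fpoly 2 N ^+ 1));
  last by rewrite expr0 expr1 mul1r.
apply: eq_uptoM; last apply: eq_uptoM.
- apply: eq_upto_trans (poly_of_seriesX _ _ _) (eq_uptoX _ _).
  exact: poly_of_series_f.
- exact: poly_of_series_szpow_f.
- by apply: poly_of_series_szpow_f => //; lia.
Qed.

Hypothesis four0 : 4%:R = 0 :> R.

Let four0_poly : 4%:R = 0 :> {poly R}.
Proof. by rewrite -polyC_natr four0. Qed.

Lemma fpoly_split k N :
  (0 < k)%N -> eq_upto N (fpoly k N) (apoly k N * (1 + 2 * tpoly k N)).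
Proof.
move=> k_gt0; pose S m := \sum_(1 <= r < N.+1) 'X^(k * m) ^+ r : {poly R}.
have -> : apoly k N * (1 + 2 * tpoly k N) =
          \prod_(1 <= m < N.+1) ((1 + 'X^(k * m)) * (1 + 2 * S m)).
  rewrite big_split /= (prod_1add2 four0_poly) /S; congr (_ * (1 + _)).
  under [in RHS]eq_bigr do under eq_bigr do rewrite -exprM.
  rewrite (mul2_sum_sym four0_poly) => [|i j]; last by rewrite mulnAC.
  by congr (2 * _); apply: eq_bigr => j _; rewrite mulnA.
rewrite /fpoly big_nat_cond [X in eq_upto _ _ X]big_nat_cond.
apply: eq_upto_prod => m /andP[/andP[m_gt0 _] _].
rewrite (factor_1sub four0_poly) -exprM; apply: eq_upto_addXn; nia.
Qed.

Lemma fpoly_sqr k N : (0 < k)%N ->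
  eq_upto N (fpoly k N ^+ 2) (fpoly (2 * k) N * (1 + 2 * tpoly k N)).
Proof.
move=> k_gt0; rewrite expr2 fpoly_double -mulrA.
exact: eq_uptoM (eq_upto_refl _ _) (fpoly_split N k_gt0).
Qed.

Lemma fpoly_denominator c N :
  eq_upto N ((1 + 2 * (tpoly 1 N + tpoly 2 N *+ c))
               * (fpoly 1 N ^+ 2 * fpoly 2 N ^+ (2 * c)))
            (fpoly 4 N ^+ c * fpoly 2 N).
Proof.
have sqr1 : eq_upto N (fpoly 1 N ^+ 2) (fpoly 2 N * (1 + 2 * tpoly 1 N)).
  exact: (@fpoly_sqr 1).
have sqr2 : eq_upto N (fpoly 2 N ^+ 2) (fpoly 4 N * (1 + 2 * tpoly 2 N)).
  exact: (@fpoly_sqr 2).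
rewrite exprM.
apply: eq_upto_trans (eq_uptoM (eq_upto_refl _ _) (eq_uptoM sqr1 (eq_uptoX c sqr2))) _.
set x := 1 + 2 * tpoly 1 N; set y := 1 + 2 * tpoly 2 N.
have -> : 1 + 2 * (tpoly 1 N + tpoly 2 N *+ c) = x * y ^+ c.
  by rewrite /x /y (expr_1add2 four0_poly); ring: four0_poly.
rewrite (_ : _ * _ = x ^+ 2 * (y ^+ 2) ^+ c * (fpoly 4 N ^+ c * fpoly 2 N)); last first.
  by rewrite exprMn -exprM mulnC exprM; ring.
by rewrite !(sqr_1add2 four0_poly) expr1n !mul1r; apply: eq_upto_refl.
Qed.

Lemma poly_of_series_abar c N :
  eq_upto N (poly_of_series N (abar c.+1)) (1 + 2 * (tpoly 1 N + tpoly 2 N *+ c)).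
Proof.
have U0 : (fpoly 1 N ^+ 2 * fpoly 2 N ^+ (2 * c))`_0 = 1 :> R.
  by rewrite coef0M !coef0X !coef0_fpoly // !expr1n mulr1.
apply: (eq_upto_mulIr U0); apply: eq_upto_trans (poly_of_series_abar_mul c N) _.
exact/eq_upto_sym/fpoly_denominator.
Qed.

End EtaProducts.

Lemma natr_Zp_eq0 p n : (1 < p)%N -> (n%:R == 0 :> 'Z_p) = (p %| n)%N.
Proof. by move=> p_gt1; rewrite -val_eqE /= val_Zp_nat. Qed.

Lemma eqz_mod_Zp p (x y : int) :
  (1 < p)%N -> (x == y %[mod p])%Z = (x%:~R == y%:~R :> 'Z_p).
Proof.
move=> p_gt1; rewrite eqz_mod_dvd -subr_eq0 -intrB.
case: (x - y) => n; rewrite dvdzE /=; first by rewrite natr_Zp_eq0.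
by rewrite NegzE intrN oppr_eq0 natr_Zp_eq0.
Qed.

Lemma sqr_neq_double_sqr j k : (0 < j)%N -> (j ^ 2 != 2 * k ^ 2)%N.
Proof.
move=> j_gt0; apply/eqP => sq_eq.
have k_gt0 : (0 < k)%N.
  by move: sq_eq; case: k => [|//]; rewrite muln0 => /eqP; rewrite expn_eq0; lia.
have := congr1 (logn 2) sq_eq; rewrite lognM ?expn_gt0 ?k_gt0 // !lognX.
by rewrite (_ : logn 2 2 = 1)%N //; lia.
Qed.

Lemma mem_scaled_squares k N n : (0 < n <= N)%N ->
  reflect (exists j, n = k * j ^ 2)%N (n \in scaled_squares k N).
Proof.
case/andP=> n_gt0 le_nN; apply: (iffP mapP) => [[j _ ->] | [j n_eq]]; first by exists j.
exists j => //; move: n_gt0 le_nN; rewrite n_eq -mulnn mem_iota.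
by rewrite !muln_gt0 => /and3P[k_gt0 j_gt0 _]; nia.
Qed.

Lemma scaled_squares_disjoint N n :
  n \in scaled_squares 1 N -> n \notin scaled_squares 2 N.
Proof.
case/mapP=> j; rewrite mem_iota mul1n => /andP[j_gt0 _] ->.
by apply/mapP=> -[i _ /eqP]; rewrite (negbTE (sqr_neq_double_sqr i j_gt0)).
Qed.

Lemma abar_Z4 c n : (0 < n)%N ->
  (abar c.+1 n)%:~R =
    2 * ((n \in scaled_squares 1 n)%:R + (n \in scaled_squares 2 n)%:R *+ c) :> 'Z_4.
Proof.
move=> n_gt0; rewrite -(coef_poly_of_series (N := n)) //.
move/eq_uptoP: (poly_of_series_abar (@pchar_Zp 4 isT) c n) => -> //.
by rewrite coefD coef1 gtn_eqF // add0r !mulr_natl coefMn coefD coefMn !coef_tpoly.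
Qed.

Theorem theorem1p3 (c n : nat) : (1 <= c)%N -> (1 <= n)%N ->
  [/\ (exists k : nat, n = (k ^ 2)%N) -> (abar c n = 2 %[mod 4])%Z,
      (exists k : nat, n = (2 * k ^ 2)%N) -> (abar c n = 2 * (c%:Z + 1) %[mod 4])%Z
    & (~ (exists k : nat, n = (k ^ 2)%N)) -> (~ (exists k : nat, n = (2 * k ^ 2)%N)) ->
        (abar c n = 0 %[mod 4])%Z].
Proof.
case: c => // c _ n_gt0.
have memP k : reflect (exists j, n = k * j ^ 2)%N (n \in scaled_squares k n).
  by apply: mem_scaled_squares; rewrite n_gt0 leqnn.
have sqP : reflect (exists j, n = j ^ 2)%N (n \in scaled_squares 1 n).
  by apply: (iffP (memP 1%N)) => -[j n_eq]; exists j; rewrite n_eq mul1n.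
have four0 := @pchar_Zp 4 isT.
split=> [/sqP sq_n | /(memP 2%N) dsq_n | /sqP/negbTE not_sq /(memP 2%N)/negbTE not_dsq];
  apply/eqP; rewrite (@eqz_mod_Zp 4) // abar_Z4 //.
- by rewrite sq_n (negbTE (scaled_squares_disjoint sq_n)) mul0rn addr0 mulr1.
- have /negbTE-> : n \notin scaled_squares 1 n.
    by apply: contraL dsq_n; apply: scaled_squares_disjoint.
  by rewrite dsq_n add0r mulr1n intrM intrD; apply/eqP; ring: four0.
- by rewrite not_sq not_dsq mul0rn addr0 mulr0.
Qed.
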